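(* Let $G$ be a discrete probability measure on $\Theta$ whose support is a finite set $\{\theta^*_1,\ldots,\theta^*_k\}\subset\Theta$ with $k\ge 1$. For every $n\ge 1$ let $G^{(n)}$ be the level $n$ SBA approximation of $G$. Then $G^{(n)}=G$ for every $n\ge k$.
   Context: $\Theta\subseteq\mathbb{R}$ is either $\mathbb{R}$, a closed half-line, or a compact interval with nonempty interior, with its Borel $\sigma$-field. A probability measure $G$ on $\Theta$ is identified with its distribution function $G(t)=G(\Theta\cap(-\infty,t])$. For $a_1\le a_2$ (endpoints allowed to be $\inf\Theta$ or $\sup\Theta$), the $G$-barycenter of $(a_1,a_2]$ is $b_G(a_1,a_2]=\frac{\int_{(a_1,a_2]}\theta\,dG(\theta)}{G(a_2)-G(a_1)}$ if $G(a_2)>G(a_1)$, and $b_G(a_1,a_2]=a_1$ if $G(a_2)=G(a_1)$. For $G$ with finite first moment, its sequential barycenter array (SBA) $\{\mu_{j,l}: j\ge1,\ 1\le l\le 2^j-1\}$ is defined by $\mu_{1,1}=\int_\Theta\theta\,dG(\theta)$ and, for $j\ge 2$: $\mu_{j,2l}=\mu_{j-1,l}$ for $1\le l\le 2^{j-1}-1$, and $\mu_{j,2l-1}=b_G(\mu_{j-1,l-1},\mu_{j-1,l}]$ for $1\le l\le 2^{j-1}$, with the convention $\mu_{j,0}=\inf\Theta$, $\mu_{j,2^j}=\sup\Theta$ for all $j$. The level $n$ intervals are $\Theta_{n,1}=[\mu_{n,0},\mu_{n,1}]$ if $\mu_{n,0}>-\infty$ and $(\mu_{n,0},\mu_{n,1}]$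 otherwise; $\Theta_{n,l}=(\mu_{n,l-1},\mu_{n,l}]$ for $2\le l\le 2^n-1$; $\Theta_{n,2^n}=(\mu_{n,2^n-1},\mu_{n,2^n}]$ if $\mu_{n,2^n}<\infty$ and $(\mu_{n,2^n-1},\infty)$ otherwise. The level $n$ SBA approximation of $G$ is the discrete measure $G^{(n)}=\sum_{l=1}^{2^n}G(\Theta_{n,l})\,\delta_{\mu_{n+1,2l-1}}$. *)

From mathcomp Require Import all_boot all_order all_algebra.
From mathcomp Require Import all_classical all_reals.
From mathcomp Require Import ereal.
Set Implicit Arguments. Unset Strict Implicit. Unset Printing Implicit Defensive.
Import Order.TTheory GRing.Theory Num.Theory.
Local Open Scope classical_set_scope.
Local Open Scope ring_scope.

Definition is_Theta (R : realType) (Th : set R) : Prop :=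
  Th = setT \/
  (exists a : R, Th = `[a, +oo[%classic) \/
  (exists a : R, Th = `]-oo, a]%classic) \/
  (exists a b : R, a < b /\ Th = `[a, b]%classic).

Definition infTheta (R : realType) (Th : set R) : \bar R := ereal_inf (EFin @` Th).
Definition supTheta (R : realType) (Th : set R) : \bar R := ereal_sup (EFin @` Th).

Definition Gmass (R : realType) (k : nat) (th w : 'I_k -> R) (S : set R) : R :=
  \sum_(i < k) w i * (th i \in S)%:R.

Definition Gint (R : realType) (k : nat) (th w : 'I_k -> R) (S : set R) : R :=
  \sum_(i < k) w i * th i * (th i \in S)%:R.

(* G-barycenter of the cell S whose left endpoint is a1 *)
Definition bary (R : realType) (k : nat) (th w : 'I_k -> R) (S : set R) (a1 : \bar R)
  : \bar R :=
  if 0 < Gmass th w S then (Gint th w S / Gmass th w S)%:E else a1.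

(* Level n cell Theta_{n,l}, 1 <= l <= 2^n, given the level-n points m 0 .. m (2^n). *)
Definition cell (R : realType) (m : nat -> \bar R) (n l : nat) : set R :=
  if l == 1%N then
    (if m 0%N != -oo%E then [set x | (m 0%N <= x%:E <= m 1%N)%E]
     else [set x | (x%:E <= m 1%N)%E])
  else if l == (2 ^ n)%N then
    (if m (2 ^ n)%N != +oo%E then [set x | (m l.-1 < x%:E <= m l)%E]
     else [set x | (m l.-1 < x%:E)%E])
  else [set x | (m l.-1 < x%:E <= m l)%E].

Fixpoint sba (R : realType) (Th : set R) (k : nat) (th w : 'I_k -> R) (j l : nat)
  : \bar R :=
  match j with
  | 0%N => if l == 0%N then infTheta Th else supTheta Th
  | j'.+1 =>
      if l == 0%N then infTheta Th
      else if (2 ^ j <= l)%N then supTheta Th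
      else match j' with
           | 0%N => (\sum_(i < k) w i * th i)%:E
           | _ => if odd l
                  then bary th w (cell (sba Th th w j') j' (l.+1)./2)
                            (sba Th th w j' l./2)
                  else sba Th th w j' l./2
           end
  end.

(* delta_e (A) for an extended real e (0 if e is infinite) *)
Definition atom (R : realType) (e : \bar R) (A : set R) : R :=
  match e with EFin r => (r \in A)%:R | _ => 0 end.

Definition SBAapprox (R : realType) (Th : set R) (k : nat) (th w : 'I_k -> R)
  (n : nat) (A : set R) : R :=
  \sum_(1 <= l < (2 ^ n).+1)
     Gmass th w (cell (sba Th th w n) n l) * atom (sba Th th w n.+1 (2 * l - 1)) A.

From mathcomp Require Import all_boot all_order all_algebra.
From mathcomp Require Import all_classical all_reals.
From mathcomp Require Import ereal.
From mathcomp Require Import zify.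
Set Implicit Arguments. Unset Strict Implicit. Unset Printing Implicit Defensive.
Import Order.TTheory GRing.Theory Num.Theory.
Local Open Scope ring_scope.

(** The SBA refines every cell Theta_{n,l} at its G-barycenter mu_{n+1,2l-1}. Within a
    cell that contains atoms, this barycenter is a weighted mean of them with positive
    weights; if the cell holds two distinct atoms, some atom lies at or below it and some
    strictly above it, so both children Theta_{n,l} ∩ (-oo, mu] and Theta_{n,l} ∩ (mu, +oo)
    hold strictly fewer atoms. Starting from the single cell holding all k atoms, every
    level-n cell thus holds at most max(1, k - n) atoms. For n >= k each cell holds at most
    one atom theta*, whose barycenter is theta* itself, so G^(n) puts the mass G{theta*}
    exactly at theta*. *)

Lemma children_ind n (P : nat -> Prop) :
  (forall l, (1 <= l <= 2 ^ n)%N -> P (2 * l - 1)%N /\ P (2 * l)%N) ->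
  forall l, (1 <= l <= 2 ^ n.+1)%N -> P l.
Proof.
move=> P_children l hl; have hp : (1 <= uphalf l <= 2 ^ n)%N by rewrite expnS in hl; lia.
have [P_odd P_even] := P_children _ hp.
by have [->|->] : l = (2 * uphalf l - 1)%N \/ l = (2 * uphalf l)%N by lia.
Qed.

Section WeightedMean.
Variables (R : realFieldType) (I : finType) (w x : I -> R) (P : pred I).
Hypothesis w_gt0 : forall i, P i -> 0 < w i.

Definition wmean := (\sum_(i | P i) w i * x i) / \sum_(i | P i) w i.

Lemma wmass_gt0 j : P j -> 0 < \sum_(i | P i) w i.
Proof.
move=> Pj; rewrite (bigD1 j) //= ltr_pwDl ?w_gt0 //.
by apply: sumr_ge0 => i /andP[Pi _]; rewrite ltW ?w_gt0.
Qed.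

Lemma wmean_ge (a : \bar R) j :
  P j -> (forall i, P i -> a <= (x i)%:E)%E -> (a <= wmean%:E)%E.
Proof.
move=> Pj; case: a => [a a_le|/(_ j Pj)|_]; [|by rewrite leye_eq|exact: leNye].
rewrite lee_fin /wmean ler_pdivlMr ?(wmass_gt0 Pj) // mulr_sumr.
by apply: ler_sum => i Pi; rewrite mulrC ler_pM2l ?w_gt0 // -lee_fin a_le.
Qed.

Lemma wmean_le (b : \bar R) j :
  P j -> (forall i, P i -> (x i)%:E <= b)%E -> (wmean%:E <= b)%E.
Proof.
move=> Pj; case: b => [b le_b|_|/(_ j Pj)]; [|exact: leey|by rewrite leeNy_eq].
rewrite lee_fin /wmean ler_pdivrMr ?(wmass_gt0 Pj) // mulr_sumr.
by apply: ler_sum => i Pi; rewrite [b * _]mulrC ler_pM2l ?w_gt0 // -lee_fin le_b.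
Qed.

Lemma wmean_lt b j :
  P j -> x j < b -> (forall i, P i -> x i <= b) -> wmean < b.
Proof.
move=> Pj lt_jb le_b; rewrite /wmean ltr_pdivrMr ?(wmass_gt0 Pj) // mulr_sumr.
rewrite [X in X < _](bigD1 j) // [X in _ < X](bigD1 j) //=.
apply: ltr_leD; first by rewrite [b * _]mulrC ltr_pM2l ?w_gt0.
by apply: ler_sum => i /andP[Pi _]; rewrite [b * _]mulrC ler_pM2l ?w_gt0 ?le_b.
Qed.

Lemma exists_le_wmean j : P j -> exists2 i, P i & x i <= wmean.
Proof.
move=> Pj; case: (arg_minP x Pj) => i Pi min_i; exists i => //.
by rewrite -lee_fin; apply: (wmean_ge Pi) => i' /min_i; rewrite lee_fin.
Qed.

Lemma exists_gt_wmean y z :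
  P y -> P z -> x y != x z -> exists2 i, P i & wmean < x i.
Proof.
move=> Py Pz neq_yz; case: (arg_maxP x Py) => i Pi max_i; exists i => //.
have le_i j : P j -> x j <= x i := max_i j.
have [j Pj lt_ji] : exists2 j, P j & x j < x i.
  have [eq_yi|ne_yi] := eqVneq (x y) (x i); last by exists y; rewrite // lt_neqAle ne_yi le_i.
  by exists z; rewrite // lt_neqAle le_i // andbT -eq_yi eq_sym.
exact: (wmean_lt Pj lt_ji).
Qed.

End WeightedMean.

Lemma infTheta_le (R : realType) (Th : set R) x : Th x -> (infTheta Th <= x%:E)%E.
Proof. by move=> Thx; apply: ereal_inf_lbound; exists x. Qed.

Lemma supTheta_ge (R : realType) (Th : set R) x : Th x -> (x%:E <= supTheta Th)%E.
Proof. by move=> Thx; apply: ereal_sup_ubound; exists x. Qed.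

Lemma GmassE (R : realType) k (th w : 'I_k -> R) S :
  Gmass th w S = \sum_(i | th i \in S) w i.
Proof.
rewrite /Gmass [RHS]big_mkcond; apply: eq_bigr => i _.
by case: (_ \in _); rewrite ?mulr1 ?mulr0.
Qed.

Lemma GintE (R : realType) k (th w : 'I_k -> R) S :
  Gint th w S = \sum_(i | th i \in S) w i * th i.
Proof.
rewrite /Gint [RHS]big_mkcond; apply: eq_bigr => i _.
by case: (_ \in _); rewrite ?mulr1 ?mulr0.
Qed.

Section SequentialBarycenterArray.
Variables (R : realType) (Th : set R) (k : nat) (th w : 'I_k -> R).
Hypotheses (k_gt0 : (0 < k)%N) (th_inj : injective th) (thTh : forall i, Th (th i)).
Hypotheses (w_gt0 : forall i, 0 < w i) (w_sum1 : \sum_(i < k) w i = 1).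

Local Notation mu := (sba Th th w).

Lemma sbaSS n l : mu n.+2 l =
  if l == 0%N then infTheta Th else if (2 ^ n.+2 <= l)%N then supTheta Th
  else if odd l then bary th w (cell (mu n.+1) n.+1 (l.+1)./2) (mu n.+1 l./2)
  else mu n.+1 l./2.
Proof. by []. Qed.

Lemma sba_0 n : mu n 0 = infTheta Th.
Proof. by case: n => [|[|n]]. Qed.

Lemma sba_top n : mu n (2 ^ n) = supTheta Th.
Proof. by case: n => [|[|n]] //; rewrite sbaSS expn_eq0 leqnn. Qed.

Lemma sba_even n l : (l <= 2 ^ n)%N -> mu n.+1 (2 * l) = mu n l.
Proof.
case: n => [|n] le_l; first by case: l le_l => [|[|l]].
rewrite sbaSS; have [->|l_gt0] := posnP l; first by rewrite sba_0.
have -> : (2 * l == 0)%N = false by lia.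
case: ifP => [le_top|_]; last by rewrite oddM mul2n doubleK.
have -> : l = (2 ^ n.+1)%N by rewrite !expnS in le_top le_l *; lia.
by rewrite sba_top.
Qed.

(* [cell] seen from the atoms: as every atom lies in Theta, its special end cells
   collapse to one formula (see [mem_cell]). *)
Definition in_cell (n l : nat) (i : 'I_k) : bool :=
  ((l == 1)%N || (mu n l.-1 < (th i)%:E)%E) && ((th i)%:E <= mu n l)%E.

Lemma in_cell_bounds n l i :
  in_cell n l i -> (mu n l.-1 <= (th i)%:E <= mu n l)%E.
Proof.
case/andP=> /orP[/eqP->|/ltW lo_i] ->; rewrite andbT //.
by rewrite sba_0 infTheta_le.
Qed.

Lemma mem_cell n l i : (1 <= l <= 2 ^ n)%N ->
  (th i \in cell (mu n) n l) = in_cell n l i.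
Proof.
move=> hl; have Th_i := thTh i.
rewrite -[LHS]/`[< cell (mu n) n l (th i) >] /cell /in_cell.
case: ifP => [/eqP->|l_ne1] /=.
  by case: ifP => _ /=; rewrite asboolb ?sba_0 ?infTheta_le.
case: ifP => [/eqP l_top|_] /=; last by rewrite asboolb.
by case: ifP => _ /=; rewrite asboolb // [in mu n l]l_top sba_top supTheta_ge ?andbT.
Qed.

Lemma bary_cell n l a : (1 <= l <= 2 ^ n)%N ->
  bary th w (cell (mu n) n l) a =
  if [exists i, in_cell n l i] then (wmean w th (in_cell n l))%:E else a.
Proof.
move=> hl; rewrite /bary GmassE GintE !(eq_bigl _ _ (fun i => mem_cell i hl)).
case: existsP => [[j ij]|none]; first by rewrite (wmass_gt0 (fun i _ => w_gt0 i) ij).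
by rewrite big_pred0 ?ltxx // => i; apply/negP => ii; apply: none; exists i.
Qed.

Lemma sba_odd n l : (1 <= l <= 2 ^ n)%N ->
  mu n.+1 (2 * l - 1) =
  if [exists i, in_cell n l i] then (wmean w th (in_cell n l))%:E else mu n l.-1.
Proof.
case: n => [|n] hl.
  have -> : l = 1%N by rewrite expn0 in hl; lia.
  have in_cell01 i : in_cell 0 1 i by rewrite /in_cell /= supTheta_ge.
  have -> : [exists i, in_cell 0 1 i] by apply/existsP; exists (Ordinal k_gt0).
  by rewrite /wmean !(eq_bigl _ _ in_cell01) w_sum1 divr1.
rewrite sbaSS.
have -> : (2 * l - 1 == 0)%N = false by lia.
have -> : (2 ^ n.+2 <= 2 * l - 1)%N = false by rewrite !expnS in hl *; lia.
have -> : odd (2 * l - 1) by rewrite oddB ?oddM //; lia.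
have -> : ((2 * l - 1).+1./2 = l)%N by lia.
have -> : ((2 * l - 1)./2 = l.-1)%N by lia.
exact: bary_cell.
Qed.

Lemma sba_odd_between n l : (1 <= l <= 2 ^ n)%N -> (mu n l.-1 <= mu n l)%E ->
  (mu n l.-1 <= mu n.+1 (2 * l - 1) <= mu n l)%E.
Proof.
move=> hl sorted_l; rewrite sba_odd //; case: existsP => [[j ij]|_]; last by rewrite lexx.
have w_cell_gt0 i : in_cell n l i -> 0 < w i by [].
by apply/andP; split; [apply: (wmean_ge w_cell_gt0 ij) | apply: (wmean_le w_cell_gt0 ij)];
  move=> i /in_cell_bounds/andP[].
Qed.

Lemma sba_sorted n l : (1 <= l <= 2 ^ n)%N -> (mu n l.-1 <= mu n l)%E.
Proof.
elim: n l => [l|n IHn].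
  rewrite expn0 => hl; have -> /= : l = 1%N by lia.
  have Th_i0 := thTh (Ordinal k_gt0).
  exact: le_trans (infTheta_le Th_i0) (supTheta_ge Th_i0).
apply: children_ind => l hl; have /andP[lo hi] := sba_odd_between hl (IHn l hl).
split.
  have -> : ((2 * l - 1).-1 = 2 * l.-1)%N by lia.
  by rewrite sba_even //; lia.
have -> : ((2 * l).-1 = 2 * l - 1)%N by lia.
by rewrite sba_even //; lia.
Qed.

Lemma sba_le n a b : (a <= b <= 2 ^ n)%N -> (mu n a <= mu n b)%E.
Proof.
case/andP; elim: b => [|b IHb]; first by rewrite leqn0 => /eqP->.
rewrite leq_eqVlt => /orP[/eqP->//|lt_ab] le_b.
by apply: le_trans (IHb lt_ab (ltnW le_b)) (sba_sorted (l := b.+1) _); lia.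
Qed.

Lemma in_cell_odd n l i : (1 <= l <= 2 ^ n)%N ->
  in_cell n.+1 (2 * l - 1) i = in_cell n l i && ((th i)%:E <= mu n.+1 (2 * l - 1))%E.
Proof.
move=> hl; have /andP[lo hi] := sba_odd_between hl (sba_sorted hl).
rewrite /in_cell; have -> : (2 * l - 1 == 1)%N = (l == 1)%N by apply/eqP/eqP; lia.
have -> : ((2 * l - 1).-1 = 2 * l.-1)%N by lia.
rewrite sba_even; last by lia.
by case: (leP (th i)%:E (mu n.+1 (2 * l - 1))) => [le_ib|_];
  rewrite ?andbF // (le_trans le_ib hi) !andbT.
Qed.

Lemma in_cell_even n l i : (1 <= l <= 2 ^ n)%N ->
  in_cell n.+1 (2 * l) i = in_cell n l i && (mu n.+1 (2 * l - 1) < (th i)%:E)%E.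
Proof.
move=> hl; have /andP[lo hi] := sba_odd_between hl (sba_sorted hl).
rewrite /in_cell; have -> : (2 * l == 1)%N = false by lia.
have -> : ((2 * l).-1 = 2 * l - 1)%N by lia.
rewrite sba_even; last by lia.
by case: (ltP (mu n.+1 (2 * l - 1)) (th i)%:E) => [lt_bi|_] /=;
  rewrite ?andbF ?andbT // (le_lt_trans lo lt_bi) orbT.
Qed.

Lemma in_some_cell n i : exists2 l, (1 <= l <= 2 ^ n)%N & in_cell n l i.
Proof.
elim: n => [|n [l hl il]]; first by exists 1%N; rewrite // /in_cell /= supTheta_ge.
have [le_ib|lt_bi] := leP (th i)%:E (mu n.+1 (2 * l - 1)).
  by exists (2 * l - 1)%N; [rewrite expnS; lia | rewrite in_cell_odd // il le_ib].
by exists (2 * l)%N; [rewrite expnS; lia | rewrite in_cell_even // il lt_bi].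
Qed.

Lemma in_cell_inj n i l l' : (1 <= l <= 2 ^ n)%N -> (1 <= l' <= 2 ^ n)%N ->
  in_cell n l i -> in_cell n l' i -> l = l'.
Proof.
wlog le_ll' : l l' / (l <= l')%N => [hwlog hl hl' il il'|].
  by case/orP: (leq_total l l') => ?; [|symmetry]; apply: hwlog.
move=> hl hl' /andP[_ le_il] /andP[lt_il' _].
rewrite leq_eqVlt in le_ll'; case/orP: le_ll' => [/eqP//|lt_ll'].
have l'_ne1 : (l' == 1)%N = false by lia.
rewrite l'_ne1 /= in lt_il'.
have le_mu : (mu n l <= mu n l'.-1)%E by apply: sba_le; lia.
by have := lt_le_trans lt_il' (le_trans le_il le_mu); rewrite ltxx.
Qed.

Lemma children_card_lt n l : (1 <= l <= 2 ^ n)%N -> (1 < #|in_cell n l|)%N ->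
  (#|in_cell n.+1 (2 * l - 1)| < #|in_cell n l|)%N /\
  (#|in_cell n.+1 (2 * l)| < #|in_cell n l|)%N.
Proof.
move=> hl /card_gt1P[y [z [iy iz ne_yz]]].
have ne_th : th y != th z by apply: contra ne_yz => /eqP/th_inj->.
have w_cell_gt0 i : in_cell n l i -> 0 < w i by [].
have b_mean : mu n.+1 (2 * l - 1) = (wmean w th (in_cell n l))%:E.
  by rewrite sba_odd //; case: existsP => // -[]; exists y.
split; apply: proper_card; apply/fintype.properP; split.
- by apply/fintype.subsetP => i; rewrite -!topredE /= in_cell_odd // => /andP[].
- have [j ij lt_bj] := exists_gt_wmean w_cell_gt0 iy iz ne_th.
  by exists j => //; rewrite -topredE /= in_cell_odd // b_mean lee_fin ij leNgt lt_bj.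
- by apply/fintype.subsetP => i; rewrite -!topredE /= in_cell_even // => /andP[].
- have [j ij le_jb] := exists_le_wmean th w_cell_gt0 iy.
  by exists j => //; rewrite -topredE /= in_cell_even // b_mean lte_fin ij ltNge le_jb.
Qed.

Lemma card_in_cell n l : (1 <= l <= 2 ^ n)%N -> (#|in_cell n l| <= maxn 1 (k - n))%N.
Proof.
elim: n l => [l _|n IHn]; first by rewrite subn0 (leq_trans (max_card _)) ?card_ord ?leq_maxr.
apply: children_ind => l hl; have := IHn l hl.
have [le1|gt1] := leqP #|in_cell n l| 1; last first.
  by have [lt_odd lt_even] := children_card_lt hl gt1; lia.
have sub_parent l' : in_cell n.+1 l' \subset in_cell n l -> (#|in_cell n.+1 l'| <= 1)%N.
  by move=> /subset_leq_card le_card; exact: leq_trans le_card le1.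
split; apply/(leq_trans (sub_parent _ _))/leq_maxl; apply/fintype.subsetP => i;
  by rewrite -!topredE /= ?in_cell_odd ?in_cell_even // => /andP[].
Qed.

Lemma cell_term n l A : (1 <= l <= 2 ^ n)%N -> (#|in_cell n l| <= 1)%N ->
  Gmass th w (cell (mu n) n l) * atom (mu n.+1 (2 * l - 1)) A =
  \sum_(i | in_cell n l i) w i * (th i \in A)%:R.
Proof.
move=> hl /card_le1_eqP one; rewrite GmassE (eq_bigl _ _ (fun i => mem_cell i hl)) sba_odd //.
case: existsP => [[j ij]|none]; last first.
  have no_atom : in_cell n l =1 xpred0 by move=> i; apply/negP => ii; apply: none; exists i.
  by rewrite !big_pred0 ?mul0r.
have cell1 : in_cell n l =1 pred1 j by move=> i; apply/idP/eqP => [ii|->//]; exact: one.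
by rewrite /wmean !(big_pred1 j cell1) /= [w j * th j]mulrC mulfK ?lt0r_neq0.
Qed.

Lemma sum_over_cells n (F : 'I_k -> R) :
  \sum_(1 <= l < (2 ^ n).+1) \sum_(i | in_cell n l i) F i = \sum_i F i.
Proof.
rewrite (exchange_big_dep xpredT) //=; apply: eq_bigr => i _.
have [l0 hl0 il0] := in_some_cell n i.
rewrite -big_filter (@eq_in_filter _ _ (pred1 l0)) ?filter_pred1_uniq ?big_seq1 //.
- exact: iota_uniq.
- by rewrite mem_index_iota; lia.
move=> l; rewrite mem_index_iota => hl /=; apply/idP/eqP => [il|->//].
by apply: in_cell_inj il il0; lia.
Qed.

Lemma SBAapprox_eq_Gmass n A : (k <= n)%N -> SBAapprox Th th w n A = Gmass th w A.
Proof.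
move=> le_kn; rewrite /SBAapprox /Gmass -(sum_over_cells n).
apply: eq_big_nat => l hl; have {}hl : (1 <= l <= 2 ^ n)%N by lia.
by apply: cell_term => //; have := card_in_cell hl; lia.
Qed.

End SequentialBarycenterArray.

Theorem theorem1 (R : realType) (Th : set R) (k : nat) (th w : 'I_k -> R) :
  is_Theta Th ->
  (1 <= k)%N ->
  injective th ->
  (forall i, Th (th i)) ->
  (forall i, 0 < w i) ->
  \sum_(i < k) w i = 1 ->
  forall n : nat, (k <= n)%N ->
  forall A : set R, SBAapprox Th th w n A = Gmass th w A.
Proof.
move=> _ k_gt0 th_inj thTh w_gt0 w_sum1 n le_kn A.
exact: SBAapprox_eq_Gmass.
Qed.
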